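(* Any satisfiable $d$-dim linear system $S$ with no divisibility constraints has a solution $x\in\mathbb{Z}^d$ such that $\|x\|_1\leq\left(2+d+d\cdot\|S\|\right)^{2d+1}$.
   Context: For a variable $\mathbf{x}$ ranging over $\mathbb{Z}^d$, a $d$-dim linear system without divisibility constraints is a propositional formula (boolean combination) whose atoms are equality constraints $\langle\alpha,\mathbf{x}\rangle=c$ and inequality constraints $\langle\alpha,\mathbf{x}\rangle\geq c$ with $\alpha\in\mathbb{Z}^d$, $c\in\mathbb{Z}$; its solutions are the $x\in\mathbb{Z}^d$ satisfying it. $\|S\|$ is the least $s\in\mathbb{N}$ with $\max\{\max_i|\alpha(i)|,|c|\}\leq s$ for all constraints in $S$. $\|x\|_1=\sum_i|x(i)|$. *)

From mathcomp Require Import all_boot all_order all_algebra.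
Set Implicit Arguments. Unset Strict Implicit. Unset Printing Implicit Defensive.
Import Order.TTheory GRing.Theory Num.Theory.
Local Open Scope ring_scope.

Definition zvec (d : nat) := {ffun 'I_d -> int}.

Definition dotz (d : nat) (a x : zvec d) : int := \sum_(i < d) a i * x i.

(* Linear systems without divisibility constraints: propositional formulas
   (boolean combinations) over equality and inequality atoms. *)
Inductive lsys (d : nat) : Type :=
  | LEq  of zvec d & int
  | LGe  of zvec d & int
  | LNot of lsys d
  | LAnd of lsys d & lsys d
  | LOr  of lsys d & lsys d.

Fixpoint sat (d : nat) (S : lsys d) (x : zvec d) : bool :=
  match S with
  | LEq a c => dotz a x == c
  | LGe a c => dotz a x >= c
  | LNot S1 => ~~ sat S1 x
  | LAnd S1 S2 => sat S1 x && sat S2 x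
  | LOr S1 S2 => sat S1 x || sat S2 x
  end.

Definition atom_norm (d : nat) (a : zvec d) (c : int) : nat :=
  maxn (\max_(i < d) `|a i|%N) `|c|%N.

Fixpoint lsys_norm (d : nat) (S : lsys d) : nat :=
  match S with
  | LEq a c => atom_norm a c
  | LGe a c => atom_norm a c
  | LNot S1 => lsys_norm S1
  | LAnd S1 S2 => maxn (lsys_norm S1) (lsys_norm S2)
  | LOr S1 S2 => maxn (lsys_norm S1) (lsys_norm S2)
  end.

Definition norm1 (d : nat) (x : zvec d) : nat := \sum_(i < d) `|x i|%N.

From mathcomp Require Import all_boot all_order all_algebra perm.
From mathcomp Require Import zify ring lra.
Import Order.TTheory GRing.Theory Num.Theory.
Set Implicit Arguments. Unset Strict Implicit. Unset Printing Implicit Defensive.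
Local Open Scope ring_scope.

(* Let s = ||S||.  Every atom of S compares a form <a, x> with a in [-s, s]^d
   to a constant in [-s, s].  Given a solution x, let C be the cone of the y
   that are conformal to x for all these forms: <a, y> vanishes where <a, x>
   does and otherwise has the weak sign of <a, x>.  If r is an integer vector
   with r and x - (s+2) r in C, then for each form either <a, r> = 0, or
   |<a, x>| >= (s+2) |<a, r>| and both <a, x> and <a, x - r> lie beyond
   [-s, s] on the same side; so x - r satisfies the same atoms as x, and it is
   shorter because the coordinate forms are among the a's.

   Such an r exists once ||x||_1 > 2^d (s+2) d! s^(d-1).  Every y in C has an
   integer r in C with ||r||_1 <= d! s^(d-1) and y - lam r in C for a lam with
   ||y||_1 <= 2^k lam ||r||_1, k being any bound on the corank of the forms
   vanishing at y; for y = x this forces lam >= s+2, and x - (s+2) r is a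
   convex combination of x and x - lam r.
   For corank 1, y spans an extreme ray of C and r is a cofactor vector of
   those forms.  Otherwise sliding from y in both directions of the kernel of
   these forms (and of the sign vector of x) until a new form vanishes writes
   y as a convex combination of two points of lower corank, and the heavier of
   their two rays serves y at the cost of a factor 2. *)

Definition conform (R : numDomainType) (u v : R) : bool :=
  if 0 < v then 0 <= u else if v < 0 then u <= 0 else u == 0.

Section Conform.
Variable R : realDomainType.
Implicit Types u v w : R.

Lemma conform0 v : conform 0 v.
Proof. by rewrite /conform lexx eqxx; case: ifP => //; case: ifP. Qed.

Lemma conformxx v : conform v v.
Proof. by rewrite /conform; case: (ltgtP 0 v) => [/ltW|/ltW|]. Qed.

Lemma conformD u1 u2 v : conform u1 v -> conform u2 v -> conform (u1 + u2) v.
Proof.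
rewrite /conform; case: ifP => _; first exact: addr_ge0.
case: ifP => _; last by move=> /eqP -> /eqP ->; rewrite addr0.
by move=> h1 h2; rewrite -oppr_ge0 opprD addr_ge0 // oppr_ge0.
Qed.

Lemma conformMl c u v : 0 <= c -> conform u v -> conform (c * u) v.
Proof.
move=> c0; rewrite /conform; case: ifP => _; first exact: mulr_ge0.
case: ifP => _; last by move=> /eqP ->; rewrite mulr0.
by move=> h; rewrite mulr_ge0_le0.
Qed.

Lemma conform_sign u v : conform u v -> u != 0 -> (0 < v) = (0 < u) /\ (v < 0) = (u < 0).
Proof.
rewrite /conform => + u0; case: (ltgtP 0 v) => [v_gt0|v_lt0|_] h.
- by split; apply/esym; [rewrite lt_def u0 h | rewrite ltNge h].
- by split; apply/esym; [rewrite ltNge h | rewrite lt_def eq_sym u0].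
- by rewrite (negbTE u0) in h.
Qed.

Lemma conform_trans w u v : conform u v -> u != 0 -> conform w u -> conform w v.
Proof.
by move=> uv u0; have [e1 e2] := conform_sign uv u0; rewrite /conform e1 e2.
Qed.

End Conform.

Lemma conform_int (R : realDomainType) (p q : int) :
  conform (p%:~R : R) q%:~R = conform p q.
Proof. by rewrite /conform !ltr0z !ler0z !ltrz0 !lerz0 intr_eq0. Qed.

Lemma conform_shift (R : realFieldType) (u z t : R) : u != 0 -> 0 <= t ->
  (u * z < 0 -> t <= - u / z) -> conform (u + t * z) u.
Proof.
move=> u0 t0 tmax; rewrite /conform; case: (ltgtP 0 u) => [u_gt0|u_lt0|u_eq0].
- case: (ltP z 0) => [z_lt0|z_ge0]; last by nra.
  have uz : u * z < 0 by rewrite pmulr_rlt0.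
  by move: (tmax uz); rewrite ler_ndivlMr //; nra.
- case: (ltP 0 z) => [z_gt0|z_le0]; last by nra.
  have uz : u * z < 0 by rewrite nmulr_rlt0.
  by move: (tmax uz); rewrite ler_pdivlMr //; nra.
- by rewrite -u_eq0 eqxx in u0.
Qed.

Lemma rV_neq0 (V : nmodType) n (y : 'rV[V]_n) : y != 0 -> exists j, y 0 j != 0.
Proof.
move=> y0; apply/existsP; apply: contraR y0 => /existsPn y0.
by apply/eqP/rowP => j; rewrite mxE; apply/eqP/negPn/y0.
Qed.

Lemma sub_kermx_tr (F : fieldType) m n (B : 'M[F]_(m, n)) (y : 'rV_n) :
  (y <= kermx B^T)%MS = (B *m y^T == 0).
Proof. by rewrite sub_kermx -(inj_eq trmx_inj) trmx_mul trmxK trmx0. Qed.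

Lemma det_norm_le (R : numDomainType) n (B : 'M[R]_n) (s : R) :
  (forall i j, `|B i j| <= s) -> `|\det B| <= n`!%:R * s ^+ n.
Proof.
move=> Bs; apply: le_trans (ler_norm_sum _ _ _) _.
have -> : n`!%:R * s ^+ n = \sum_(σ : 'S_n) s ^+ n by rewrite sumr_const card_Sn mulr_natl.
apply: ler_sum => σ _.
rewrite normrM normrX normrN1 expr1n mul1r normr_prod.
have -> : s ^+ n = \prod_(i < n) s by rewrite prodr_const card_ord.
by apply: ler_prod => i _; rewrite normr_ge0 Bs.
Qed.

Definition cofactor_row (R : comPzRingType) n (B : 'M[R]_(n, n.+1)) : 'rV[R]_n.+1 :=
  \row_j ((-1) ^+ j * \det (col' j B)).

Lemma map_cofactor_row (R S : comPzRingType) (f : {rmorphism R -> S}) n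
    (B : 'M[R]_(n, n.+1)) :
  map_mx f (cofactor_row B) = cofactor_row (map_mx f B).
Proof. by apply/rowP => j; rewrite !mxE rmorphM rmorphXn rmorphN1 -map_col' det_map_mx. Qed.

Lemma row'0_col_mx (T : Type) n p (y : 'rV[T]_p) (B : 'M[T]_(n, p)) :
  row' (0 : 'I_n.+1) (col_mx y B : 'M_(1 + n, p)) = B.
Proof.
apply/matrixP => i j; rewrite !mxE.
have -> : lift 0 i = rshift 1 i :> 'I_(1 + n) by apply: val_inj.
by rewrite (unsplitK (inr i : 'I_1 + 'I_n)).
Qed.

Lemma mul_cofactor_row (R : comPzRingType) n (y : 'rV[R]_n.+1) (B : 'M[R]_(n, n.+1)) :
  y *m (cofactor_row B)^T = (\det (col_mx y B : 'M_n.+1))%:M /\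
  B *m (cofactor_row B)^T = 0.
Proof.
have adjE : (cofactor_row B)^T = col 0 (\adj (col_mx y B : 'M_n.+1)).
  by apply/colP => j; rewrite !mxE /cofactor (col'_col_mx j y B) row'0_col_mx add0n.
have := congr1 (col 0) (mul_mx_adj (col_mx y B : 'M_n.+1)).
rewrite colE -mulmxA -colE -adjE (mul_col_mx y B) => eq_mx; split.
- have := congr1 (@usubmx R 1 n 1) eq_mx; rewrite col_mxKu => ->.
  by apply/matrixP => i k; rewrite !ord1 !mxE.
- have := congr1 (@dsubmx R 1 n 1) eq_mx; rewrite col_mxKd => ->.
  by apply/matrixP => i k; rewrite !mxE.
Qed.

Lemma det_col_mx_neq0 (R : realFieldType) n (y : 'rV[R]_n.+1) (B : 'M[R]_(n, n.+1)) :
  row_free B -> y != 0 -> B *m y^T = 0 -> \det (col_mx y B : 'M_n.+1) != 0.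
Proof.
move=> Bfree y0 By; apply/negP => /det0P [v v0 vM].
have [v1 [v2 ev]] : exists (v1 : 'rV_1) (v2 : 'rV_n), v = row_mx v1 v2.
  by exists (@lsubmx R 1 1 n v), (@rsubmx R 1 1 n v); rewrite hsubmxK.
have {vM} : row_mx v1 v2 *m (col_mx y B : 'M_(1 + n, n.+1)) = 0 by rewrite -ev.
rewrite mul_row_col => vM.
have yy_gt0 : 0 < (y *m y^T) 0 0.
  have [j yj] := rV_neq0 y0; rewrite mxE (bigD1 j) //= ltr_pwDl ?sumr_ge0 //.
    by rewrite mxE lt_def mulf_neq0 // -expr2 sqr_ge0.
  by move=> i _; rewrite mxE -expr2 sqr_ge0.
have v10 : v1 = 0.
  have := congr1 (fun X => (X *m y^T) 0 0) vM.
  rewrite /= mulmxDl -!mulmxA By mulmx0 addr0 mul0mx !mxE big_ord1 => /eqP.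
  by rewrite mulf_eq0 (gt_eqF yy_gt0) orbF => /eqP v00; apply/rowP => k; rewrite ord1 mxE.
move: vM; rewrite v10 mul0mx add0r => /eqP; rewrite mulmx_free_eq0 // => /eqP v20.
by move: v0; rewrite ev v10 v20 row_mx0 eqxx.
Qed.

Lemma kermx_line (F : fieldType) n (B : 'M[F]_(n, n.+1)) (y z : 'rV[F]_n.+1) :
  row_free B -> y != 0 -> B *m y^T = 0 -> B *m z^T = 0 -> exists c, z = c *: y.
Proof.
move=> Bfree y0 By Bz; apply/sub_rVP.
have yK : (y <= kermx B^T)%MS by rewrite sub_kermx_tr By.
have rkK : \rank (kermx B^T) = 1%N.
  by rewrite mxrank_ker mxrank_tr (eqP Bfree) subSnn.
have Ky : (kermx B^T <= y)%MS by rewrite -(mxrank_leqif_sup yK).2 rkK rank_rV y0.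
by apply: submx_trans Ky; rewrite sub_kermx_tr Bz.
Qed.

(* The cofactor vector of B spans its kernel; its entries are maximal minors of B. *)
Lemma int_kernel_vector (R : realFieldType) n (s : nat) (B : 'M[int]_(n, n.+1))
    (y : 'rV[R]_n.+1) :
  (forall i j, `|B i j| <= s%:Z) -> row_free (map_mx intr B : 'M[R]_(n, n.+1)) ->
  y != 0 -> map_mx intr B *m y^T = 0 ->
  exists r : 'rV[int]_n.+1, exists c : R,
    [/\ 0 < c, map_mx intr r = c *: y & forall j, `|r 0 j| <= (n`! * s ^ n)%N%:Z].
Proof.
move=> Bs Bfree y0 By.
have [yr Br] := mul_cofactor_row y (map_mx intr B).
rewrite -map_cofactor_row in yr Br.
have r_bound j : `|cofactor_row B 0 j| <= (n`! * s ^ n)%N%:Z.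
  rewrite mxE normrM normrX normrN1 expr1n mul1r PoszM -!natz natrX.
  by apply: det_norm_le => i k; rewrite mxE natz.
have [c rc] := kermx_line Bfree y0 By Br.
have c0 : c != 0.
  apply: contraNneq (det_col_mx_neq0 Bfree y0 By) => c0.
  by move/matrixP/(_ 0 0): yr; rewrite rc c0 scale0r trmx0 mulmx0 !mxE /= mulr1n => <-.
case: (ltgtP c 0) => [c_lt0|c_gt0|c_eq0]; last by rewrite c_eq0 eqxx in c0.
- exists (- cofactor_row B), (- c).
  by split; [rewrite oppr_gt0 | rewrite map_mxN rc scaleNr | move=> j; rewrite mxE normrN].
- by exists (cofactor_row B), c.
Qed.

Lemma int_kernel_vector_rank (R : realFieldType) m n (s : nat) (B : 'M[int]_(m, n.+1))
    (y : 'rV[R]_n.+1) :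
  (forall i j, `|B i j| <= s%:Z) -> \rank (map_mx intr B : 'M[R]_(m, n.+1)) = n ->
  y != 0 -> map_mx intr B *m y^T = 0 ->
  exists r : 'rV[int]_n.+1, exists c : R,
    [/\ 0 < c, map_mx intr r = c *: y & forall j, `|r 0 j| <= (n`! * s ^ n)%N%:Z].
Proof.
set BR := map_mx intr B => Bs rkB y0 By.
pose g i := maxrankfun BR (cast_ord (esym rkB) i).
apply: (@int_kernel_vector R n s (rowsub g B)) => //; rewrite ?map_mxsub -/BR.
- by move=> i j; rewrite mxE.
- have -> : rowsub g BR = rowsub (cast_ord (esym rkB)) (rowsub (maxrankfun BR) BR).
    by apply/matrixP => i j; rewrite !mxE.
  by rewrite /row_free rowsub_cast eqmx_cast (eqP (maxrowsub_free BR)) rkB.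
- by rewrite mul_rowsub_mx By; apply/matrixP => i j; rewrite !mxE.
Qed.

Section L1Norm.
Variables (R : numDomainType) (n : nat).
Implicit Types u v y : 'rV[R]_n.

Definition l1 y : R := \sum_j `|y 0 j|.

Lemma l1_ge0 y : 0 <= l1 y.
Proof. by apply: sumr_ge0 => j _; apply: normr_ge0. Qed.

Lemma l1Z a y : l1 (a *: y) = `|a| * l1 y.
Proof. by rewrite /l1 mulr_sumr; apply: eq_bigr => j _; rewrite mxE normrM. Qed.

Lemma l1_comb a b u v : 0 <= a -> 0 <= b -> l1 (a *: u + b *: v) <= a * l1 u + b * l1 v.
Proof.
move=> a0 b0; rewrite /l1 !mulr_sumr -big_split; apply: ler_sum => j _.
by rewrite !mxE; apply: le_trans (ler_normD _ _) _; rewrite !normrM (ger0_norm a0) (ger0_norm b0).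
Qed.

Lemma l1_intr (x : 'rV[int]_n) : l1 (map_mx intr x) = (\sum_j `|x 0%R j|)%N%:R.
Proof. by rewrite natr_sum; apply: eq_bigr => j _; rewrite mxE -intr_norm -pmulrn. Qed.

Lemma l1_0 : l1 0 = 0.
Proof. by rewrite /l1 big1 // => j _; rewrite mxE normr0. Qed.

End L1Norm.

Section ConformalCone.
Variables (R : realFieldType) (n m s : nat) (A : 'M[int]_(m, n.+1)).
Hypothesis A_bound : forall i j, `|A i j| <= s%:Z.
Hypothesis A_unit : forall j, exists i, forall j', A i j' = (j == j')%:R.
Variable x0 : 'rV[R]_n.+1.
Implicit Types y z w : 'rV[R]_n.+1.

Definition lform i y : R := \sum_j (A i j)%:~R * y 0 j.

Lemma lformD i y z : lform i (y + z) = lform i y + lform i z.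
Proof. by rewrite /lform -big_split; apply: eq_bigr => j _; rewrite mxE mulrDr. Qed.

Lemma lformZ i c y : lform i (c *: y) = c * lform i y.
Proof. by rewrite /lform mulr_sumr; apply: eq_bigr => j _; rewrite mxE mulrCA. Qed.

Lemma lformB i y z : lform i (y - z) = lform i y - lform i z.
Proof. by rewrite lformD -scaleN1r lformZ mulN1r. Qed.

Lemma lform0 i : lform i 0 = 0.
Proof. by rewrite -(scale0r 0) lformZ mul0r. Qed.

Lemma lform_intr i (r : 'rV[int]_n.+1) :
  lform i (map_mx intr r) = (\sum_j A i j * r 0 j)%:~R.
Proof. by rewrite rmorph_sum; apply: eq_bigr => j _; rewrite mxE rmorphM. Qed.

Lemma lform_unit j : exists i, forall y, lform i y = y 0 j.
Proof.
have [i Ai] := A_unit j; exists i => y; rewrite /lform (bigD1 j) //= big1 => [|k kj].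
  by rewrite Ai eqxx mul1r addr0.
by rewrite Ai eq_sym (negbTE kj) mul0r.
Qed.

Definition in_cone y := forall i, conform (lform i y) (lform i x0).

Lemma in_cone0 : in_cone 0.
Proof. by move=> i; rewrite lform0 conform0. Qed.

Lemma in_cone_x0 : in_cone x0.
Proof. by move=> i; apply: conformxx. Qed.

Lemma in_cone_comb a b y z :
  0 <= a -> 0 <= b -> in_cone y -> in_cone z -> in_cone (a *: y + b *: z).
Proof. by move=> a0 b0 yC zC i; rewrite lformD !lformZ conformD ?conformMl. Qed.

Lemma in_coneZ a y : 0 <= a -> in_cone y -> in_cone (a *: y).
Proof. by move=> a0 yC i; rewrite lformZ conformMl. Qed.

Definition active_mx y : 'M[int]_(m, n.+1) :=
  \matrix_(i, j) (if lform i y == 0 then A i j else 0).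

Local Notation active y := (map_mx intr (active_mx y) : 'M[R]_(m, n.+1)).
Local Notation intv r := (map_mx intr r : 'rV[R]_n.+1).

Lemma active_mulE y w i : (active y *m w^T) i 0 = if lform i y == 0 then lform i w else 0.
Proof.
rewrite mxE; case: ifP => yi.
  by apply: eq_bigr => j _; rewrite !mxE yi.
by apply: big1 => j _; rewrite !mxE yi mul0r.
Qed.

Lemma active_perp y w :
  active y *m w^T = 0 <-> (forall i, lform i y = 0 -> lform i w = 0).
Proof.
split=> [yw i yi|yw].
  by have := congr1 (fun X : 'M_(m, 1) => X i 0) yw; rewrite /= active_mulE yi eqxx mxE.
by apply/matrixP => i k; rewrite ord1 active_mulE mxE; case: eqP => // /yw.
Qed.

Lemma rank_active y : y != 0 -> (\rank (active y) <= n)%N.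
Proof.
move=> y0; have /mxrankS : (y <= kermx (active y)^T)%MS.
  by rewrite sub_kermx_tr; apply/eqP/active_perp.
by rewrite mxrank_ker mxrank_tr rank_rV y0 /=; move: (rank_leq_col (active y)); lia.
Qed.

Lemma active_rank_grows y w t i : (forall k, lform k y = 0 -> lform k w = 0) ->
  lform i y != 0 -> lform i (y + t *: w) = 0 ->
  (\rank (active y) < \rank (active (y + t *: w)))%N.
Proof.
move=> wy yi yti; apply: rank_ltmx; rewrite ltmxE; apply/andP; split.
  apply/row_subP => k; have [yk|yk] := eqVneq (lform k y) 0.
    have -> : row k (active y) = row k (active (y + t *: w)).
      by apply/rowP => j; rewrite !mxE lformD lformZ yk (wy _ yk) mulr0 addr0 eqxx.
    exact: row_sub.
  have -> : row k (active y) = 0 by apply/rowP => j; rewrite !mxE (negbTE yk) mulr0z.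
  exact: sub0mx.
apply/negP => /(submx_trans (row_sub i (active (y + t *: w)))) /submxP [D eD].
have wi : lform i w != 0 by apply: contraNneq yi => wi; rewrite -yti lformD lformZ wi mulr0 addr0.
have := congr1 (fun X => (X *m w^T) 0 0) eD.
rewrite /= -row_mul mxE active_mulE yti eqxx -mulmxA.
by have /active_perp -> := wy; rewrite mulmx0 mxE => /eqP; rewrite (negbTE wi).
Qed.

Lemma first_wall y w i0 : in_cone y -> (forall i, lform i y = 0 -> lform i w = 0) ->
  lform i0 y * lform i0 w < 0 ->
  exists2 t, 0 < t & in_cone (y + t *: w) /\
    exists i, lform i y != 0 /\ lform i (y + t *: w) = 0.
Proof.
move=> yC wy yw0.
pose q i := - lform i y / lform i w.
have [i1 yw1 q_min] := @arg_minP _ _ _ i0 (fun i => lform i y * lform i w < 0) q yw0.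
have yi1 : lform i1 y != 0 by apply: contraTneq yw1 => ->; rewrite mul0r ltxx.
have wi1 : lform i1 w != 0 by apply: contraTneq yw1 => ->; rewrite mulr0 ltxx.
have q_gt0 : 0 < q i1.
  have -> : q i1 = - (lform i1 y * lform i1 w) / (lform i1 w ^+ 2) by rewrite /q; field.
  by rewrite divr_gt0 ?oppr_gt0 // exprn_even_gt0.
exists (q i1) => //; split; last by exists i1; rewrite lformD lformZ /q divfK // addrN.
move=> i; rewrite lformD lformZ; have [yi|yi] := eqVneq (lform i y) 0.
  by rewrite yi (wy _ yi) mulr0 addr0 conform0.
exact: conform_trans (yC i) yi (conform_shift yi (ltW q_gt0) (q_min i)).
Qed.

(* The coordinate forms put y in the closed orthant of x0, and a nonzero w
   orthogonal to the sign vector of x0 points out of that orthant somewhere. *)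
Lemma opposing_form y w : in_cone y -> (forall i, lform i y = 0 -> lform i w = 0) ->
  w != 0 -> \sum_j w 0 j * Num.sg (x0 0 j) = 0 -> exists i, lform i y * lform i w < 0.
Proof.
move=> yC wy w0 ws.
have y_supp j : w 0 j != 0 -> y 0 j != 0.
  by have [i ei] := lform_unit j; rewrite -!ei; apply: contra_neq (wy i).
have sg_y j : w 0 j != 0 -> Num.sg (x0 0 j) = Num.sg (y 0 j).
  move=> wj; have [i ei] := lform_unit j.
  have yi : lform i y != 0 by rewrite ei y_supp.
  have [e1 e2] := conform_sign (yC i) yi.
  by rewrite -!ei !sgr_def !neq_lt e1 e2.
have [j wsj] : exists j, w 0 j * Num.sg (x0 0 j) < 0.
  case/boolP: [exists j, w 0 j * Num.sg (x0 0 j) < 0] => [/existsP //|/existsPn ws_ge0].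
  have [j wj] := rV_neq0 w0.
  have F0 k : w 0 k * Num.sg (x0 0 k) = 0.
    by apply: (psumr_eq0P _ ws) => // l _; rewrite leNgt ws_ge0.
  move/eqP: (F0 j).
  by rewrite sg_y // mulf_eq0 sgr_eq0 (negbTE wj) (negbTE (y_supp j wj)).
have wj : w 0 j != 0 by apply: contraTneq wsj => ->; rewrite mul0r ltxx.
have [i ei] := lform_unit j; exists i; rewrite !ei.
have -> : y 0 j * w 0 j = `|y 0 j| * (w 0 j * Num.sg (y 0 j)).
  by rewrite {1}[y 0 j]numEsg; ring.
by rewrite pmulr_rlt0 ?normr_gt0 ?y_supp // -sg_y.
Qed.

Definition sliding_dirs y := kermx (col_mx (active y) (\row_j Num.sg (x0 0 j)))^T.

Lemma sliding_dirsP y w : (w <= sliding_dirs y)%MS ->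
  (forall i, lform i y = 0 -> lform i w = 0) /\ \sum_j w 0 j * Num.sg (x0 0 j) = 0.
Proof.
rewrite sub_kermx_tr mul_col_mx col_mx_eq0 => /andP [/eqP/active_perp yw /eqP ws].
split=> //; move/matrixP/(_ 0 0): ws; rewrite !mxE => ws; rewrite -[RHS]ws.
by apply: eq_bigr => j _; rewrite !mxE mulrC.
Qed.

Lemma sliding_dirs_neq0 y : (\rank (active y) < n)%N -> sliding_dirs y != 0.
Proof.
move=> rk; rewrite -mxrank_eq0 mxrank_ker mxrank_tr -addsmxE -lt0n subn_gt0.
apply: leq_ltn_trans (mxrank_adds_leqif _ _) _.
by move: (rank_leq_row (\row_j Num.sg (x0 0 j))); lia.
Qed.

Lemma slide_to_wall y w : in_cone y -> w != 0 -> (w <= sliding_dirs y)%MS ->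
  exists2 t, 0 < t &
    in_cone (y + t *: w) /\ (\rank (active y) < \rank (active (y + t *: w)))%N.
Proof.
move=> yC w0 /sliding_dirsP [wy ws].
have [i yw] := opposing_form yC wy w0 ws.
have [t t_gt0 [ytC [k [yk ytk]]]] := first_wall yC wy yw.
by exists t => //; split=> //; apply: active_rank_grows wy yk ytk.
Qed.

Lemma cone_split y : in_cone y -> (\rank (active y) < n)%N ->
  exists a b y1 y2, [/\ 0 <= a, 0 <= b & y = a *: y1 + b *: y2] /\
    [/\ in_cone y1, in_cone y2, (\rank (active y) < \rank (active y1))%N
      & (\rank (active y) < \rank (active y2))%N].
Proof.
move=> yC /sliding_dirs_neq0/rowV0Pn [w wS w0].
have [t1 t1_gt0 [C1 rk1]] := slide_to_wall yC w0 wS.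
have Nw0 : - w != 0 by rewrite oppr_eq0.
have NwS : (- w <= sliding_dirs y)%MS by rewrite eqmx_opp.
have [t2 t2_gt0 [C2 rk2]] := slide_to_wall yC Nw0 NwS.
have t12 : t1 + t2 != 0 by rewrite gt_eqF // addr_gt0.
exists (t2 / (t1 + t2)), (t1 / (t1 + t2)), (y + t1 *: w), (y + t2 *: - w).
split; split=> //; rewrite ?divr_ge0 ?ltW ?addr_gt0 //.
by apply/rowP => j; rewrite !mxE; field.
Qed.

Definition heavy_ray k y := exists r : 'rV[int]_n.+1, exists lam : R,
  [/\ 0 <= lam, in_cone (intv r), in_cone (y - lam *: intv r),
      l1 (intv r) <= ((n.+1)`! * s ^ n)%:R
    & l1 y <= 2 ^+ k * lam * l1 (intv r)].

Lemma heavy_ray0 k : heavy_ray k 0.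
Proof.
exists 0, 0; rewrite map_mx0 scale0r subr0 l1_0 mulr0.
by split=> //; apply: in_cone0.
Qed.

Lemma heavy_rayW k k' y : (k <= k')%N -> heavy_ray k y -> heavy_ray k' y.
Proof.
move=> kk' [r [lam [lam_ge0 rC yrC r_bound y_bound]]]; exists r, lam; split=> //.
apply: le_trans y_bound _; rewrite -!mulrA ler_wpM2r ?mulr_ge0 ?l1_ge0 //.
by rewrite ler_weXn2l // ler1n.
Qed.

Lemma heavy_ray_comb k a b y1 y2 : 0 <= a -> 0 <= b -> in_cone y1 -> in_cone y2 ->
  heavy_ray k y1 -> heavy_ray k y2 -> heavy_ray k.+1 (a *: y1 + b *: y2).
Proof.
move=> + + + + [r1 [lam1 H1]] [r2 [lam2 H2]].
wlog le12 : a b y1 y2 r1 r2 lam1 lam2 H1 H2 /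
    b * lam2 * l1 (intv r2) <= a * lam1 * l1 (intv r1).
  move=> W a0 b0 C1 C2; case: (lerP (b * lam2 * l1 (intv r2))
    (a * lam1 * l1 (intv r1))) => [|/ltW] le12; first exact: W H1 H2 le12 a0 b0 C1 C2.
  by rewrite addrC; apply: W H2 H1 le12 b0 a0 C2 C1.
move=> a0 b0 C1 C2; case: H1 => lam1_ge0 r1C yr1C r1_bound y1_bound.
case: H2 => lam2_ge0 r2C yr2C r2_bound y2_bound.
exists r1, (a * lam1); split=> //; first exact: mulr_ge0.
  have -> : a *: y1 + b *: y2 - (a * lam1) *: intv r1 =
      a *: (y1 - lam1 *: intv r1) + b *: y2 by rewrite scalerBr scalerA addrAC.
  exact: in_cone_comb.
have := l1_comb y1 y2 a0 b0; have := ler_wpM2l a0 y1_bound.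
have := ler_wpM2l b0 y2_bound; have := ler_wpM2l (exprn_ge0 k (ler0n R 2)) le12.
rewrite exprS; lra.
Qed.

Lemma heavy_ray_extreme y : y != 0 -> in_cone y -> \rank (active y) = n -> heavy_ray 0 y.
Proof.
move=> y0 yC rk.
have act_bound i j : `|active_mx y i j| <= s%:Z.
  by rewrite mxE; case: ifP => _; rewrite ?normr0.
have act_y : active y *m y^T = 0 by apply/active_perp.
have [r [c [c_gt0 rc r_bound]]] := int_kernel_vector_rank act_bound rk y0 act_y.
exists r, c^-1; rewrite rc; split.
- by rewrite invr_ge0 ltW.
- exact: in_coneZ (ltW c_gt0) yC.
- by rewrite scalerA mulVf ?gt_eqF // scale1r subrr; apply: in_cone0.
- rewrite -rc l1_intr ler_nat.
  have -> : ((n.+1)`! * s ^ n)%N = (\sum_(j < n.+1) n`! * s ^ n)%N.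
    by rewrite sum_nat_const card_ord factS mulnA.
  by apply: leq_sum => j _; rewrite -lez_nat abszE r_bound.
- by rewrite expr0 mul1r l1Z gtr0_norm // mulrA mulVf ?gt_eqF // mul1r.
Qed.

Lemma heavy_ray_cone k y :
  in_cone y -> (n.+1 - \rank (active y) <= k)%N -> heavy_ray k y.
Proof.
elim: k y => [|k IH] y yC rk; have [->|y0] := eqVneq y 0; try exact: heavy_ray0.
  by move: (rank_active y0) rk; lia.
case: (ltnP (\rank (active y)) n) => [rk_lt|rk_ge].
  have [a [b [y1 [y2 [[a0 b0 ey] [C1 C2 rk1 rk2]]]]]] := cone_split yC rk_lt.
  by rewrite ey; apply: heavy_ray_comb => //; apply: IH => //; lia.
apply: heavy_rayW (leq0n _) (heavy_ray_extreme y0 yC _).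
by apply/eqP; rewrite eqn_leq rk_ge rank_active.
Qed.

Lemma cone_int_step (c : R) :
  0 < c -> 2 ^+ n.+1 * c * ((n.+1)`! * s ^ n)%:R < l1 x0 ->
  exists r : 'rV[int]_n.+1, [/\ r != 0, in_cone (intv r) & in_cone (x0 - c *: intv r)].
Proof.
move=> c_gt0 x0_big.
have [r [lam [lam_ge0 rC x0rC r_bound x0_bound]]] :=
  heavy_ray_cone in_cone_x0 (leq_subr _ _).
set rR := map_mx intr r in rC x0rC r_bound x0_bound *.
have rR_ge0 := l1_ge0 rR; have two_gt0 : 0 < 2 ^+ n.+1 :> R by apply: exprn_gt0.
have c_le : c <= lam.
  rewrite leNgt; apply/negP => lam_lt; move: x0_big; apply/negP; rewrite -leNgt.
  apply: le_trans x0_bound _; rewrite -!mulrA ler_pM2l //.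
  by apply: ler_pM => //; apply: ltW.
exists r; split=> //.
- apply: contraTneq x0_big => r0; rewrite -leNgt.
  apply: le_trans x0_bound _; rewrite /rR r0 map_mx0 l1_0 mulr0.
  by rewrite mulr_ge0 ?ler0n // mulr_ge0 // ltW.
- have -> : x0 - c *: rR = (1 - c / lam) *: x0 + (c / lam) *: (x0 - lam *: rR).
    have lam0 : lam != 0 by rewrite gt_eqF // (lt_le_trans c_gt0).
    by apply/rowP => j; rewrite !mxE; field.
  apply: in_cone_comb in_cone_x0 x0rC.
    by rewrite subr_ge0 ler_pdivrMr ?mul1r // (lt_le_trans c_gt0).
  by rewrite divr_ge0 // ltW.
Qed.

End ConformalCone.

Section CoefficientMatrix.
Variables (n s : nat).

Definition coef_mx : 'M[int]_(#|{: {ffun 'I_n -> 'I_(2 * s).+1}}|, n) :=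
  \matrix_(i, j) (((enum_val i : {ffun 'I_n -> 'I_(2 * s).+1}) j : nat)%:Z - s%:Z).

Lemma coef_mx_bound i j : `|coef_mx i j| <= s%:Z.
Proof. by rewrite mxE; case: (enum_val i j) => t /= t_lt; lia. Qed.

Lemma coef_mx_onto (a : 'I_n -> int) : (forall j, `|a j| <= s)%N ->
  exists i, forall j, coef_mx i j = a j.
Proof.
move=> a_bound; pose e : {ffun 'I_n -> 'I_(2 * s).+1} := [ffun j => inord `|a j + s%:Z|].
by exists (enum_rank e) => j; rewrite mxE enum_rankK ffunE inordK; move: (a_bound j); lia.
Qed.

Lemma coef_mx_unit : (0 < s)%N -> forall j, exists i, forall j', coef_mx i j' = (j == j')%:R.
Proof. by move=> s_gt0 j; apply: coef_mx_onto => j'; case: (j == j'). Qed.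

End CoefficientMatrix.

Lemma dotz_unit d (j : 'I_d) (v : zvec d) : dotz [ffun k => (j == k)%:R] v = v j.
Proof.
rewrite /dotz (bigD1 j) //= big1 => [|k kj]; first by rewrite ffunE eqxx mul1r addr0.
by rewrite ffunE eq_sym (negbTE kj) mul0r.
Qed.

Lemma dotzB d (a x y : zvec d) : dotz a (x - y) = dotz a x - dotz a y.
Proof. by rewrite /dotz -sumrB; apply: eq_bigr => j _; rewrite !ffunE mulrBr. Qed.

Lemma atom_norm_le d (a : zvec d) c s :
  (atom_norm a c <= s)%N -> (forall j, `|a j| <= s)%N /\ (`|c| <= s)%N.
Proof.
rewrite /atom_norm geq_max => /andP [a_bound c_bound]; split=> // j.
exact: leq_trans (leq_bigmax_cond _ isT) a_bound.
Qed.

Definition atoms_agree d s (x y : zvec d) := forall (a : zvec d) (c : int),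
  (atom_norm a c <= s)%N ->
  (dotz a x == c) = (dotz a y == c) /\ (c <= dotz a x) = (c <= dotz a y).

Lemma atoms_agree0 d (x y : zvec d) : atoms_agree 0 x y.
Proof.
move=> a c /atom_norm_le [a0 c0].
have dotz0 v : dotz a v = 0.
  by apply: big1 => j _; move: (a0 j); rewrite leqn0 absz_eq0 => /eqP ->; rewrite mul0r.
by rewrite !dotz0.
Qed.

Lemma sat_agree d (S : lsys d) s x y :
  (lsys_norm S <= s)%N -> atoms_agree s x y -> sat S x = sat S y.
Proof.
move=> + xy; elim: S => [a c|a c|S IH|S1 IH1 S2 IH2|S1 IH1 S2 IH2] /= S_le.
- exact: (xy a c S_le).1.
- exact: (xy a c S_le).2.
- by rewrite IH.
- by move: S_le; rewrite geq_max => /andP [/IH1 -> /IH2 ->].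
- by move: S_le; rewrite geq_max => /andP [/IH1 -> /IH2 ->].
Qed.

Lemma conform_shift_cases (s : nat) (u v : int) :
  conform v u -> conform (u - s.+2%:Z * v) u ->
  [\/ v = 0, 0 < v /\ s%:Z < u - v | v < 0 /\ u - v < - s%:Z].
Proof.
rewrite /conform; case: (ltgtP 0 u) => [u_gt0|u_lt0|<-]; last by move/eqP; constructor 1.
- by move=> v_ge0 h; case: (ltgtP v 0) => *; [lia|constructor 2; nia|constructor 1].
- by move=> v_le0 h; case: (ltgtP v 0) => *; [constructor 3; nia|lia|constructor 1].
Qed.

Lemma conform_shift_absz (s : nat) (u v : int) :
  conform v u -> conform (u - s.+2%:Z * v) u ->
  (`|u - v| <= `|u|)%N /\ (v != 0 -> (`|u - v| < `|u|)%N).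
Proof.
move=> vu shift; case: (conform_shift_cases vu shift) => [->|[]|[]] *.
- by rewrite subr0 eqxx.
- by split=> *; lia.
- by split=> *; lia.
Qed.

Section ConformalStep.
Variables (d s : nat).
Implicit Types x r : zvec d.

Definition conformal_step x r := forall a : zvec d, (forall j, `|a j| <= s)%N ->
  conform (dotz a r) (dotz a x) /\ conform (dotz a x - s.+2%:Z * dotz a r) (dotz a x).

Lemma conformal_step_agree x r : conformal_step x r -> atoms_agree s (x - r) x.
Proof.
move=> step a c /atom_norm_le [/step [rx rx_shift] c_bound].
rewrite dotzB; case: (conform_shift_cases rx rx_shift) => [->|[]|[]] *.
- by rewrite subr0.
- by split; [apply/eqP/eqP|apply/idP/idP]; lia.
- by split; [apply/eqP/eqP|apply/idP/idP]; lia.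
Qed.

Lemma conformal_step_shrink x r : (0 < s)%N -> r != 0 -> conformal_step x r ->
  (norm1 (x - r)%R < norm1 x)%N.
Proof.
move=> s_gt0 r0 step.
have coord j : (`|(x - r)%R j| <= `|x j|)%N /\ (r j != 0 -> (`|(x - r)%R j| < `|x j|)%N).
  have unit_bound k : (`|([ffun k' => (j == k')%:R] : zvec d) k| <= s)%N.
    by rewrite ffunE; case: (j == k).
  have [] := step _ unit_bound; rewrite !dotz_unit => rx rx_shift.
  by rewrite !ffunE; apply: conform_shift_absz rx rx_shift.
have [j rj] : exists j, r j != 0.
  apply/existsP; apply: contraR r0 => /existsPn r0.
  by apply/eqP/ffunP => j; rewrite ffunE; apply/eqP/negPn/r0.
rewrite /norm1 (bigD1 j) //= [X in (_ < X)%N](bigD1 j) //= -addSn.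
by rewrite leq_add ?((coord j).2 rj) // leq_sum // => k _; apply: (coord k).1.
Qed.

End ConformalStep.

Lemma exists_conformal_step n s (x : zvec n.+1) : (0 < s)%N ->
  (2 ^ n.+1 * s.+2 * ((n.+1)`! * s ^ n) < norm1 x)%N ->
  exists2 r : zvec n.+1, r != 0 & conformal_step s x r.
Proof.
move=> s_gt0 x_big; pose X : 'rV[rat]_n.+1 := map_mx intr (\row_j x j).
have X_big : 2 ^+ n.+1 * s.+2%:R * ((n.+1)`! * s ^ n)%:R < l1 X.
  rewrite l1_intr -natrX -!natrM ltr_nat.
  by under eq_bigr do rewrite mxE.
have [r [r0 rC XrC]] :=
  cone_int_step (@coef_mx_bound n.+1 s) (coef_mx_unit s_gt0) (ltr0Sn _ _) X_big.
exists [ffun j => r 0 j].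
  apply: contraNneq r0 => /ffunP r0; apply/eqP/rowP => j.
  by move: (r0 j); rewrite !ffunE mxE.
move=> a /coef_mx_onto [i ai].
have lformE (v : 'rV[int]_n.+1) :
    lform (coef_mx n.+1 s) i (map_mx intr v) = (dotz a [ffun j => v 0 j])%:~R.
  by rewrite lform_intr; congr _%:~R; apply: eq_bigr => j _; rewrite ai ffunE.
have xE : [ffun j => (\row_j x j) 0 j] = x by apply/ffunP => j; rewrite !ffunE mxE.
have := XrC i; have := rC i; rewrite lformB lformZ !lformE xE.
have -> : (s.+2%:R : rat) = (s.+2%:Z)%:~R by [].
by rewrite -intrM -intrB !conform_int.
Qed.

Lemma small_solution n (S : lsys n.+1) (x : zvec n.+1) : (0 < lsys_norm S)%N -> sat S x ->
  exists y : zvec n.+1, sat S y /\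
    (norm1 y <= 2 ^ n.+1 * (lsys_norm S).+2 * ((n.+1)`! * lsys_norm S ^ n))%N.
Proof.
move=> s_gt0; have [k] := ubnP (norm1 x); elim: k x => // k IH x x_lt Sx.
case: (leqP (norm1 x) (2 ^ n.+1 * (lsys_norm S).+2 * ((n.+1)`! * lsys_norm S ^ n)))
  => [|x_big]; first by exists x.
have [r r0 step] := exists_conformal_step s_gt0 x_big.
apply: (IH (x - r)); first exact: leq_trans (conformal_step_shrink s_gt0 r0 step) x_lt.
by rewrite (sat_agree (leqnn _) (conformal_step_agree step)).
Qed.

Lemma leq_expn2r e m n : (m <= n)%N -> (m ^ e <= n ^ e)%N.
Proof. by move=> mn; elim: e => // e IH; rewrite !expnS leq_mul. Qed.

Lemma fact_leq_expn n : ((n.+1)`! <= n.+1 ^ n)%N.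
Proof.
elim: n => // n IH; rewrite factS expnS leq_mul //.
exact: leq_trans IH (leq_expn2r _ (leqnSn _)).
Qed.

Lemma threshold_le n s :
  (2 ^ n.+1 * s.+2 * ((n.+1)`! * s ^ n) <= (2 + n.+1 + n.+1 * s) ^ (2 * n.+1 + 1))%N.
Proof.
set N := (2 + n.+1 + n.+1 * s)%N.
have two_le : (2 ^ n.+1 <= N ^ n.+1)%N by apply: leq_expn2r; lia.
have s_le : (s.+2 <= N)%N by nia.
have fact_le : ((n.+1)`! * s ^ n <= N ^ n)%N.
  apply: leq_trans (_ : n.+1 ^ n * s ^ n <= N ^ n)%N.
    by rewrite leq_mul2r fact_leq_expn orbT.
  by rewrite -expnMn; apply: leq_expn2r; lia.
apply: leq_trans (_ : N ^ n.+1 * N * N ^ n <= _)%N; first by rewrite !leq_mul.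
have -> : (N ^ n.+1 * N * N ^ n = N ^ (2 * n.+1))%N.
  by rewrite -expnSr -expnD; congr (expn _ _); lia.
by rewrite expnD expn1 leq_pmulr.
Qed.

Theorem lemma22 (d : nat) (S : lsys d) :
  (exists x : zvec d, sat S x) ->
  exists x : zvec d, sat S x /\
    (norm1 x <= (2 + d + d * lsys_norm S) ^ (2 * d + 1))%N.
Proof.
case=> x Sx; case: d S x Sx => [|n] S x Sx.
  by exists x; rewrite /norm1 big_ord0.
have [s0|s_gt0] := posnP (lsys_norm S).
  exists 0; split; last by rewrite /norm1 big1 // => j _; rewrite ffunE.
  by rewrite (sat_agree (s := 0) (y := x) _ (atoms_agree0 _ _)) ?s0.
have [y [Sy y_le]] := small_solution s_gt0 Sx.
by exists y; split=> //; apply: leq_trans y_le (threshold_le _ _).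
Qed.
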